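(* For every sectorial solution of system (CSF) there exists $c_0>0$ such that $\min_i|\mathbf v_i(t)|\ge c_0$ for all $t\ge0$.
   Context: Fix integers $N\ge1$, $n\ge1$, masses $m_1,\dots,m_N>0$ with $M=\sum_i m_i$, parameters $\sigma>0$, $p>0$, $\kappa\ge0$, and a communication kernel $\phi:[0,\infty)\to(0,\infty)$ that is smooth, positive and non-increasing. Write $\phi_{ij}=\phi(|\mathbf x_i-\mathbf x_j|)$, with $|\cdot|$ the Euclidean norm on $\mathbb R^n$. System (CSF) is, for $i=1,\dots,N$, $$\dot{\mathbf x}_i=\mathbf v_i,\qquad \dot{\mathbf v}_i=\sum_{j=1}^N m_j\phi_{ij}(\mathbf v_j-\mathbf v_i)+\sigma(\theta_i-|\mathbf v_i|^p)\mathbf v_i,\qquad \dot\theta_i=\kappa\sum_{j=1}^N m_j\phi_{ij}(\theta_j-\theta_i),$$ with $\mathbf x_i,\mathbf v_i\in\mathbb R^n$ and initial values $\theta_i(0)>0$; solutions are considered for $t\ge0$. A solution is called sectorial if there exists a unit vector $\mathbf e\in\mathbb R^n$ with $\mathbf e\cdot\mathbf v_i(0)>0$ for all $i=1,\dots,N$. *)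

From mathcomp Require Import all_boot all_order all_algebra.
From mathcomp Require Import all_classical all_reals all_analysis.
Import Order.TTheory GRing.Theory Num.Theory.
Import numFieldNormedType.Exports.
Set Implicit Arguments. Unset Strict Implicit. Unset Printing Implicit Defensive.
Local Open Scope ring_scope.
Local Open Scope classical_set_scope.

Definition dotp (R : realType) (n : nat) (u w : 'I_n -> R) : R :=
  \sum_(k < n) u k * w k.

Definition enorm (R : realType) (n : nat) (u : 'I_n -> R) : R :=
  Num.sqrt (\sum_(k < n) u k ^+ 2).

Definition comm_kernel (R : realType) (phi : R -> R) : Prop :=
  [/\ (forall (j : nat) (r : R), 0 <= r -> derivable (derive1n j phi) r 1),
      (forall r : R, 0 <= r -> 0 < phi r)
    & (forall r s : R, 0 <= r -> r <= s -> phi s <= phi r)].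

Definition phi_ij (R : realType) (N n : nat) (phi : R -> R)
  (x : 'I_N -> 'I_n -> R -> R) (i j : 'I_N) (t : R) : R :=
  phi (enorm (fun k => x i k t - x j k t)).

Definition CSF_solution (R : realType) (N n : nat) (m : 'I_N -> R)
  (sigma p kappa : R) (phi : R -> R)
  (x v : 'I_N -> 'I_n -> R -> R) (theta : 'I_N -> R -> R) : Prop :=
  [/\ (forall i, 0 < theta i 0),
      (forall i k, {within [set r : R | 0 <= r], continuous (x i k)}),
      (forall i k, {within [set r : R | 0 <= r], continuous (v i k)}),
      (forall i, {within [set r : R | 0 <= r], continuous (theta i)})
    & (forall t : R, 0 < t -> forall i : 'I_N,
        (forall k : 'I_n, is_derive t 1 (x i k) (v i k t)) /\
        (forall k : 'I_n, is_derive t 1 (v i k)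
            (\sum_(j < N) m j * phi_ij phi x i j t * (v j k t - v i k t)
             + sigma * (theta i t - powR (enorm (fun k' => v i k' t)) p) * v i k t)) /\
        is_derive t 1 (theta i)
            (kappa * \sum_(j < N) m j * phi_ij phi x i j t * (theta j t - theta i t)))].

Definition sectorial (R : realType) (N n : nat) (v : 'I_N -> 'I_n -> R -> R) : Prop :=
  exists e : 'I_n -> R, enorm e = 1 /\ forall i, 0 < dotp e (fun k => v i k 0).

(* Everything rests on a minimum principle for finite families of functions
   on [0, +oo) (min_principle): a family starting above a level c stays
   above it when, at any time where some member is the minimum and lies
   below c, its derivative is at least K times its (negative) distance to c.
   This is applied three times to the solution:
   1. to theta_i and -theta_i, so theta stays in [a, A], the extreme bounds
      of its initial values (theta_ge, theta_le);
   2. to e . v_i - kap |v_i|, so the velocities stay in a cone around the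
      sectorial direction e (cone_invariant); here Cauchy-Schwarz controls
      the derivative of |v_i|;
   3. to the headings e . v_i, which stay above c = min(d, kap a^(1/p)):
      inside the cone an agent slower than a^(1/p) self-accelerates
      (heading_lower).
   Since e is a unit vector, |v_i| >= e . v_i >= c. *)
From mathcomp Require Import all_boot all_order all_algebra.
From mathcomp Require Import all_classical all_reals all_analysis.
From mathcomp Require Import ring lra.
Import Order.TTheory GRing.Theory Num.Theory.
Import numFieldNormedType.Exports.
Local Open Scope ring_scope.
Local Open Scope classical_set_scope.

Section HalfLineContinuity.
Context {R : realType}.

Definition cont0 (f : R -> R) : Prop :=
  forall t : R, 0 <= t -> f @ within [set r : R | 0 <= r] (nbhs t) --> f t.

Lemma cont0P {f : R -> R} :
  {within [set r : R | 0 <= r], continuous f} -> cont0 f.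
Proof. by move=> /subspace_continuousP fc t t0; apply: fc. Qed.

Lemma continuous_cont0 {f : R -> R} : continuous f -> cont0 f.
Proof. by move=> fc t _; apply: cvg_within_filter (fc t). Qed.

Lemma cont0D {f g : R -> R} : cont0 f -> cont0 g -> cont0 (fun s => f s + g s).
Proof. by move=> cf cg t t0; apply: cvgD; [apply: cf | apply: cg]. Qed.

Lemma cont0N {f : R -> R} : cont0 f -> cont0 (fun s => - f s).
Proof. by move=> cf t t0; apply: cvgN; apply: cf. Qed.

Lemma cont0M {f g : R -> R} : cont0 f -> cont0 g -> cont0 (fun s => f s * g s).
Proof. by move=> cf cg t t0; apply: cvgM; [apply: cf | apply: cg]. Qed.

Lemma cont0Z (c : R) {f : R -> R} : cont0 f -> cont0 (fun s => c * f s).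
Proof. by apply: cont0M; apply: continuous_cont0 => s; apply: cvg_cst. Qed.

Lemma cont0_sum {I : Type} {r : seq I} {F : I -> R -> R} :
  (forall k, cont0 (F k)) -> cont0 (fun s => \sum_(k <- r) F k s).
Proof.
elim: r => [|a r IH] cF t t0.
  by under eq_fun do rewrite big_nil; rewrite big_nil; apply: cvg_cst.
under eq_fun do rewrite big_cons.
by rewrite big_cons; apply: cvgD (cF a t t0) (IH cF t t0).
Qed.

Lemma cont0_comp {f h : R -> R} : cont0 f -> continuous h -> cont0 (h \o f).
Proof. by move=> cf ch t t0; apply: (continuous_cvg _ (ch _)); apply: cf. Qed.

Lemma cont0_gt_near {N : nat} {f : 'I_N -> R -> R} {t z : R} :
  (forall i, cont0 (f i)) -> 0 <= t -> (forall i, z < f i t) ->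
  exists2 e : R, 0 < e & forall s, 0 <= s -> `|t - s| < e -> forall i, z < f i s.
Proof.
move=> cf t0 zf.
have near_each i : \forall s \near t, 0 <= s -> z < f i s.
  exact: (cvgr_gt _ (cf i t t0) z (zf i)).
have near_all : \forall s \near t, forall i, 0 <= s -> z < f i s.
  exact: filter_forall _ near_each.
move: near_all => /nbhs_ballP [e e0 He].
by exists e => // s s0 ts i; apply: (He s) => //; rewrite /ball.
Qed.

Lemma cont0_lt_near {f : R -> R} {t z : R} : cont0 f -> 0 <= t -> f t < z ->
  exists2 e : R, 0 < e & forall s, 0 <= s -> `|t - s| < e -> f s < z.
Proof.
move=> cf t0 fz.
have near_t : \forall s \near t, 0 <= s -> f s < z.
  exact: (cvgr_lt _ (cf t t0) z fz).
move: near_t => /nbhs_ballP [e e0 He].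
by exists e => // s s0 ts; apply: (He s) => //; rewrite /ball.
Qed.

End HalfLineContinuity.

Section MinimumPrinciple.
Context {R : realType}.

Lemma left_point {t e : R} : 0 < t -> 0 < e ->
  exists s : R, [/\ 0 <= s, s < t & t - s < e].
Proof.
move=> t0 e0; exists (t - Num.min e t / 2).
have m0 : 0 < Num.min e t by rewrite lt_min e0 t0.
have me : Num.min e t <= e by rewrite ge_min lexx.
have mt : Num.min e t <= t by rewrite ge_min lexx orbT.
split; lra.
Qed.

Lemma is_derive_cont {f : R -> R} {t d : R} :
  is_derive t 1 f d -> {for t, continuous f}.
Proof. by move=> [df _]; apply: differentiable_continuous; apply/derivable1_diffP. Qed.

Lemma deriv_left_lt {g : R -> R} {t d : R} : is_derive t 1 g d -> 0 < d ->
  exists2 e : R, 0 < e & forall h, 0 < h -> h < e -> g (t - h) < g t.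
Proof.
case=> dg dv d0.
have : \forall h \near 0^', 0 < h^-1 *: ((g \o shift t) (h *: 1) - g t).
  exact: cvgr_gt _ (cvg_toP dg dv) 0 d0.
rewrite /dnbhs near_withinE => /nbhs_ballP [e e0 He].
exists e => // h h0 he.
have := He (- h); rewrite /ball /= sub0r opprK gtr0_norm // => /(_ he).
rewrite oppr_eq0 gt_eqF // => /(_ isT).
by rewrite /GRing.scale /= mulr1 nmulr_rgt0 ?invr_lt0 ?oppr_lt0 // subr_lt0 addrC.
Qed.

Lemma is_derive_expR_lin (a s : R) :
  is_derive s 1 (fun s => expR (a * s)) (a * expR (a * s)).
Proof.
have lin : is_derive s 1 (fun s : R => a * s) a.
  exact: is_derive_eq (is_deriveZ a (is_derive_id s 1)) (mulr1 a).
exact: is_derive_eq (is_derive1_comp (is_derive_expR _) lin) (mulrC _ _).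
Qed.

Lemma first_touch {N : nat} {g : 'I_N -> R -> R} {c t0 : R} {i0 : 'I_N} :
  (forall i, cont0 (g i)) -> (forall i, c < g i 0) -> 0 <= t0 -> g i0 t0 <= c ->
  exists2 ts : R, 0 < ts & exists i, [/\ g i ts = c,
    forall j, c <= g j ts & forall s j, 0 <= s -> s < ts -> c < g j s].
Proof.
move=> cg g0 t00 gt0.
pose S := [set s : R | 0 <= s /\ exists i, g i s <= c].
have neS : S !=set0 by exists t0; split => //; exists i0.
have lbS : lbound S 0 by move=> s [].
pose ts := inf S.
have ts0 : 0 <= ts := lb_le_inf neS lbS.
have le_ts : forall s, S s -> ts <= s := ge_inf (ex_intro _ 0 lbS).
have before_ts s j : 0 <= s -> s < ts -> c < g j s.
  move=> s0 sts; rewrite ltNge; apply/negP => gj.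
  by have := le_ts s (conj s0 (ex_intro _ j gj)); lra.
have later s : 0 <= s -> s <= ts -> (forall j, c < g j s) -> s < ts.
  move=> s0 sts above; have [e e0 He] := cont0_gt_near cg s0 above.
  suff : s + e / 2 <= ts by lra.
  apply: (lb_le_inf neS) => r [r0 [j gj]]; rewrite leNgt; apply/negP => rse.
  have sr : s <= r by have := le_ts r (conj r0 (ex_intro _ j gj)); lra.
  have close : `|s - r| < e by rewrite distrC ger0_norm; lra.
  by have := He r r0 close j; lra.
have tsp : 0 < ts by apply: later; rewrite ?lexx.
have at_ts j : c <= g j ts.
  rewrite leNgt; apply/negP => /(cont0_lt_near (cg j) ts0) [e e0 He].
  have [s [s0 sts tse]] := left_point tsp e0.
  have := before_ts s j s0 sts; have := He s s0; rewrite ger0_norm; lra.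
exists ts => //.
have [i gi] : exists i, g i ts <= c.
  apply: contrapT => none; suff : ts < ts by rewrite ltxx.
  apply: later; rewrite ?lexx // => j; rewrite ltNge; apply/negP => gj.
  by apply: none; exists j.
by exists i; split => //; have := at_ts i; lra.
Qed.

(* Minimum principle for a finite family on [0, +oo): if the family starts
   above c and, whenever a member is the minimum and below c, its derivative
   is at least K * (f_i - c), then the family stays above c.  The proof
   perturbs the family by eps * exp((K + 1) s), which turns the hypothesis
   into a strictly positive derivative at the first touching time. *)
Lemma min_principle {N : nat} (f : 'I_N -> R -> R) (c K : R) :
  0 <= K -> (forall i, cont0 (f i)) -> (forall i, c <= f i 0) ->
  (forall t, 0 < t -> forall i, f i t < c -> (forall j, f i t <= f j t) ->
     exists2 d, is_derive t 1 (f i) d & K * (f i t - c) <= d) ->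
  forall t, 0 <= t -> forall i, c <= f i t.
Proof.
move=> K0 cf f0 f_rate t0 t00 i0; rewrite leNgt; apply/negP => below.
pose E s := expR ((K + 1) * s).
have E0 s : 0 < E s by apply: expR_gt0.
pose eps := (c - f i0 t0) / (2 * E t0).
have eps0 : 0 < eps by rewrite divr_gt0 ?subr_gt0 ?mulr_gt0.
pose g i s := f i s + eps * E s.
have dE (s : R) : is_derive s 1 (fun s => eps * E s) (eps * ((K + 1) * E s)).
  exact: (is_deriveZ eps (is_derive_expR_lin (K + 1) s)).
have cg i : cont0 (g i).
  apply: (cont0D (cf i)); apply: continuous_cont0 => s; apply: is_derive_cont (dE s).
have g0 i : c < g i 0 by have := f0 i; have := mulr_gt0 eps0 (E0 0); rewrite /g; lra.
have gt0 : g i0 t0 <= c.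
  have -> : g i0 t0 = f i0 t0 + (c - f i0 t0) / 2.
    by rewrite /g /eps; field; rewrite gt_eqF.
  lra.
have [ts ts0 [i [gc above before]]] := first_touch cg g0 t00 gt0.
have epsE0 := mulr_gt0 eps0 (E0 ts).
have fc : f i ts - c = - (eps * E ts) by move: gc; rewrite /g; lra.
have fmin j : f i ts <= f j ts by have := above j; move: gc; rewrite /g; lra.
have [d fd Kd] := f_rate ts ts0 i ltac:(lra) fmin.
have dg : is_derive ts 1 (g i) (d + eps * ((K + 1) * E ts)) := is_deriveD fd (dE ts).
have dpos : 0 < d + eps * ((K + 1) * E ts).
  by move: Kd; rewrite fc mulrN; nra.
have [e e0 He] := deriv_left_lt dg dpos.
have [s [s0 sts tse]] := left_point ts0 e0.
have := He (ts - s) ltac:(lra) tse; rewrite opprB addrC subrK gc.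
by have := before s i s0 sts; lra.
Qed.

End MinimumPrinciple.

Section EuclideanGeometry.
Context {R : realType} {n : nat}.
Implicit Types a b : 'I_n -> R.

Lemma enorm_ge0 a : 0 <= enorm a.
Proof. exact: sqrtr_ge0. Qed.

Lemma enorm_sq a : enorm a ^+ 2 = \sum_k a k ^+ 2.
Proof. by rewrite /enorm sqr_sqrtr // sumr_ge0 // => k _; apply: sqr_ge0. Qed.

Lemma dotp_self a : dotp a a = enorm a ^+ 2.
Proof. by rewrite enorm_sq /dotp; apply: eq_bigr => k _; rewrite expr2. Qed.

(* Cauchy-Schwarz, from Lagrange's identity
   |a|^2 |b|^2 - (a.b)^2 = 1/2 sum_(k,l) (a_k b_l - a_l b_k)^2. *)
Lemma cauchy_schwarz a b : `|dotp a b| <= enorm a * enorm b.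
Proof.
suff sq : dotp a b ^+ 2 <= (enorm a * enorm b) ^+ 2.
  rewrite -(@ler_pXn2r _ 2%N) // ?nnegrE ?mulr_ge0 ?enorm_ge0 //.
  by rewrite real_normK ?num_real.
rewrite exprMn !enorm_sq /dotp.
have lagrange : \sum_(k < n) \sum_(l < n) (a k * b l - a l * b k) ^+ 2 =
  \sum_(k < n) \sum_(l < n) (a k ^+ 2 * b l ^+ 2)
  + \sum_(k < n) \sum_(l < n) (b k ^+ 2 * a l ^+ 2)
  - 2 * \sum_(k < n) \sum_(l < n) ((a k * b k) * (a l * b l)).
  rewrite mulr_sumr -big_split -sumrB; apply: eq_bigr => k _.
  rewrite mulr_sumr -big_split -sumrB; apply: eq_bigr => l _ /=; ring.
have : 0 <= \sum_(k < n) \sum_(l < n) (a k * b l - a l * b k) ^+ 2.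
  by apply: sumr_ge0 => k _; apply: sumr_ge0 => l _; apply: sqr_ge0.
by rewrite lagrange -!big_distrlr /= expr2; lra.
Qed.

Lemma dotp_le_enorm a b : enorm a = 1 -> dotp a b <= enorm b.
Proof. by move=> a1; rewrite -[leRHS]mul1r -a1; apply: le_trans (ler_norm _) (cauchy_schwarz _ _). Qed.

Lemma dotp_relax {N : nat} (w : 'I_N -> R) (y : 'I_N -> 'I_n -> R) (lam : R) i a :
  dotp a (fun k => \sum_j w j * (y j k - y i k) + lam * y i k) =
  \sum_j w j * (dotp a (y j) - dotp a (y i)) + lam * dotp a (y i).
Proof.
rewrite /dotp; under eq_bigr do rewrite mulrDr mulr_sumr.
rewrite big_split /= exchange_big /= mulr_sumr.
congr (_ + _); last by apply: eq_bigr => k _; ring.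
by apply: eq_bigr => j _; rewrite -sumrB mulr_sumr; apply: eq_bigr => k _; ring.
Qed.

Lemma norm_relax_le {N : nat} (w : 'I_N -> R) (y : 'I_N -> 'I_n -> R) (lam : R) i :
  (forall j, 0 <= w j) ->
  dotp (y i) (fun k => \sum_j w j * (y j k - y i k) + lam * y i k) <=
  enorm (y i) * (\sum_j w j * (enorm (y j) - enorm (y i)) + lam * enorm (y i)).
Proof.
move=> w0; rewrite dotp_relax dotp_self mulrDr mulr_sumr.
apply: lerD; last by rewrite expr2 mulrCA.
apply: ler_sum => j _.
have cs : dotp (y i) (y j) <= enorm (y i) * enorm (y j).
  exact: le_trans (ler_norm _) (cauchy_schwarz _ _).
have -> : enorm (y i) * (w j * (enorm (y j) - enorm (y i))) =
  w j * (enorm (y i) * enorm (y j) - enorm (y i) ^+ 2) by ring.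
by apply: ler_wpM2l => //; rewrite lerD2r.
Qed.

End EuclideanGeometry.

Section CurvesInRn.
Context {R : realType} {n : nat}.

Lemma is_derive_sumf {N : nat} (F : 'I_N -> R -> R) (dF : 'I_N -> R) (t : R) :
  (forall k, is_derive t 1 (F k) (dF k)) ->
  is_derive t 1 (fun s => \sum_k F k s) (\sum_k dF k).
Proof. by move=> dFk; have := is_derive_sum dFk; rewrite fct_sumE. Qed.

Variable y : 'I_n -> R -> R.

Lemma cont0_dotp (a : 'I_n -> R) :
  (forall k, cont0 (y k)) -> cont0 (fun s => dotp a (fun k => y k s)).
Proof.
by move=> cy; apply: cont0_sum => k; apply: cont0Z.
Qed.

Lemma cont0_enorm :
  (forall k, cont0 (y k)) -> cont0 (fun s => enorm (fun k => y k s)).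
Proof.
move=> cy; apply: (cont0_comp (h := Num.sqrt)); last exact: sqrt_continuous.
by apply: cont0_sum => k; rewrite /GRing.exp /=; apply: cont0M.
Qed.

Lemma is_derive_dotp (a dy : 'I_n -> R) (t : R) :
  (forall k, is_derive t 1 (y k) (dy k)) ->
  is_derive t 1 (fun s => dotp a (fun k => y k s)) (dotp a dy).
Proof.
by move=> dyk; apply: is_derive_sumf => k; apply: is_deriveZ.
Qed.

Lemma is_derive_enorm (dy : 'I_n -> R) (t : R) :
  (forall k, is_derive t 1 (y k) (dy k)) -> 0 < enorm (fun k => y k t) ->
  is_derive t 1 (fun s => enorm (fun k => y k s))
    (dotp (fun k => y k t) dy / enorm (fun k => y k t)).
Proof.
move=> dyk ypos.
have dsq : is_derive t 1 (fun s => \sum_k y k s ^+ 2) (\sum_k 2 * y k t * dy k).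
  apply: is_derive_sumf => k; apply: (is_derive_eq (is_deriveX 2 (dyk k))).
  by rewrite /GRing.scale /= expr1.
have sq_pos : 0 < \sum_k y k t ^+ 2 by rewrite -enorm_sq exprn_gt0.
apply: is_derive_eq (is_derive1_comp (is_derive1_sqrt sq_pos) dsq) _.
have -> : \sum_k 2 * y k t * dy k = 2 * dotp (fun k => y k t) dy.
  by rewrite /dotp mulr_sumr; apply: eq_bigr => k _; rewrite mulrA.
rewrite -/(enorm (fun k => y k t)); field; rewrite gt_eqF //.
Qed.

End CurvesInRn.

Section FiniteFamilies.
Context {R : realType} {N : nat}.

Lemma lb_fin (f : 'I_N -> R) : (forall i, 0 < f i) ->
  exists2 d, 0 < d & forall i, d <= f i.
Proof.
move=> fpos; exists (1 + \sum_j (f j)^-1)^-1.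
  by rewrite invr_gt0 ltr_pwDl // sumr_ge0 // => j _; rewrite invr_ge0 ltW.
move=> i; rewrite -(invrK (f i)) lef_pV2 ?posrE ?invr_gt0 ?ltr_pwDl //;
  try by rewrite sumr_ge0 // => j _; rewrite invr_ge0 ltW.
have rest : 0 <= \sum_(j | j != i) (f j)^-1.
  by rewrite sumr_ge0 // => j _; rewrite invr_ge0 ltW.
by rewrite (bigD1 i) //=; lra.
Qed.

Lemma ub_fin (f : 'I_N -> R) : exists2 A, 0 <= A & forall i, f i <= A.
Proof.
exists (\sum_j `|f j|); first by rewrite sumr_ge0.
move=> i; apply: le_trans (ler_norm _) _.
by rewrite (bigD1 i) //= lerDl sumr_ge0.
Qed.

Lemma cone_aperture (u w : 'I_N -> R) : (forall i, 0 < u i) -> (forall i, 0 <= w i) ->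
  exists2 k, 0 < k & forall i, k * w i <= u i.
Proof.
move=> upos wge0.
have [k k0 kle] := lb_fin _ (fun i => divr_gt0 (upos i) (ltr_pwDr ltr01 (wge0 i))).
exists k => // i; have := kle i; rewrite ler_pdivlMr ?ltr_pwDr //.
by have := wge0 i; have := upos i; nra.
Qed.

End FiniteFamilies.

Section CSFDynamics.
Context {R : realType} {N n : nat}.
Variables (m : 'I_N -> R) (sigma p kappa : R) (phi : R -> R).
Variables (x v : 'I_N -> 'I_n -> R -> R) (theta : 'I_N -> R -> R).
Hypotheses (m_pos : forall i, 0 < m i) (sigma_pos : 0 < sigma) (p_pos : 0 < p).
Hypotheses (kappa_ge0 : 0 <= kappa) (phi_pos : forall r, 0 <= r -> 0 < phi r).
Hypothesis sol : CSF_solution m sigma p kappa phi x v theta.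

Definition weight (i j : 'I_N) (t : R) : R := m j * phi_ij phi x i j t.
Definition speed (i : 'I_N) (t : R) : R := enorm (fun k => v i k t).
Definition heading (e : 'I_n -> R) (i : 'I_N) (t : R) : R := dotp e (fun k => v i k t).
Definition growth (i : 'I_N) (t : R) : R := sigma * (theta i t - powR (speed i t) p).

Lemma weight_ge0 (i j : 'I_N) (t : R) : 0 <= weight i j t.
Proof. by rewrite mulr_ge0 ?ltW // phi_pos // enorm_ge0. Qed.

Lemma v_cont i k : cont0 (v i k).
Proof. by case: sol => _ _ cv _ _; apply: cont0P. Qed.

Lemma theta_cont i : cont0 (theta i).
Proof. by case: sol => _ _ _ cth _; apply: cont0P. Qed.

Lemma velocity_deriv (t : R) (i : 'I_N) : 0 < t -> forall k : 'I_n, is_derive t 1 (v i k)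
  (\sum_j weight i j t * (v j k t - v i k t) + growth i t * v i k t).
Proof. by case: sol => _ _ _ _ eqs tp; case: (eqs t tp i) => _ []. Qed.

Lemma theta_deriv (t : R) (i : 'I_N) : 0 < t ->
  is_derive t 1 (theta i) (kappa * \sum_j weight i j t * (theta j t - theta i t)).
Proof. by case: sol => _ _ _ _ eqs tp; case: (eqs t tp i) => _ []. Qed.

Lemma theta_ge (a : R) : (forall i, a <= theta i 0) ->
  forall t, 0 <= t -> forall i, a <= theta i t.
Proof.
move=> a0; apply: (min_principle _ _ 0 (lexx _) theta_cont) => // t tp i _ tmin.
exists (kappa * \sum_j weight i j t * (theta j t - theta i t)); first exact: theta_deriv.
by rewrite mul0r mulr_ge0 // sumr_ge0 // => j _; rewrite mulr_ge0 ?weight_ge0 ?subr_ge0.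
Qed.

Lemma theta_le (A : R) : (forall i, theta i 0 <= A) ->
  forall t, 0 <= t -> forall i, theta i t <= A.
Proof.
move=> A0 t t0 i; rewrite -lerN2; move: t t0 i.
apply: (min_principle _ _ 0 (lexx _) (fun i => cont0N (theta_cont i))).
  by move=> i; rewrite lerN2.
move=> t tp i _ tmin.
exists (- (kappa * \sum_j weight i j t * (theta j t - theta i t))).
  exact: is_deriveN (theta_deriv t i tp).
rewrite mul0r -mulrN -sumrN mulr_ge0 // sumr_ge0 // => j _.
by rewrite -mulrN opprB mulr_ge0 ?weight_ge0 // subr_ge0 -lerN2.
Qed.

Lemma heading_deriv (e : 'I_n -> R) (t : R) (i : 'I_N) : 0 < t ->
  is_derive t 1 (heading e i)
    (\sum_j weight i j t * (heading e j t - heading e i t) + growth i t * heading e i t).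
Proof.
move=> tp; rewrite /heading -(dotp_relax _ (fun j k => v j k t)).
exact: is_derive_dotp (velocity_deriv t i tp).
Qed.

Lemma speed_deriv_le (t : R) (i : 'I_N) : 0 < t -> 0 < speed i t ->
  exists2 d, is_derive t 1 (speed i) d &
    d <= \sum_j weight i j t * (speed j t - speed i t) + growth i t * speed i t.
Proof.
move=> tp vpos; have dv := velocity_deriv t i tp.
exists (dotp (fun k => v i k t) (fun k => \sum_j weight i j t * (v j k t - v i k t)
          + growth i t * v i k t) / speed i t); first exact: is_derive_enorm dv vpos.
rewrite ler_pdivrMr // mulrC.
exact: (norm_relax_le _ (fun j k => v j k t) _ i (weight_ge0 i ^~ t)).
Qed.

(* Cone invariance: if kap |v_i| <= e . v_i initially, this persists.  The
   defect e . v_i - kap |v_i| of the worst agent decays at most at the rate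
   sigma * A, where A bounds theta. *)
Lemma cone_invariant (e : 'I_n -> R) (kap A : R) : 0 <= kap -> 0 <= A ->
  (forall t, 0 <= t -> forall i, theta i t <= A) ->
  (forall i, kap * speed i 0 <= heading e i 0) ->
  forall t, 0 <= t -> forall i, kap * speed i t <= heading e i t.
Proof.
move=> kap0 A0 thA init t t0 i; rewrite -subr_ge0; move: t t0 i.
apply: (min_principle (fun i s => heading e i s - kap * speed i s) 0 (sigma * A)).
- by rewrite mulr_ge0 // ltW.
- move=> i; apply: cont0D; first exact: cont0_dotp (v_cont i).
  by apply/cont0N/cont0Z/cont0_enorm/v_cont.
- by move=> i; rewrite subr_ge0.
move=> t tp i defect worst.
have cs := cauchy_schwarz e (fun k => v i k t); rewrite -/(heading e i t) in cs.
have vpos : 0 < speed i t.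
  rewrite lt_neqAle enorm_ge0 andbT; apply/eqP => v0.
  by move: cs defect; rewrite -/(speed i t) -v0 !mulr0 subr0 normr_le0 => /eqP ->; rewrite ltxx.
have [ds dsd ds_le] := speed_deriv_le t i tp vpos.
exists (\sum_j weight i j t * (heading e j t - heading e i t) + growth i t * heading e i t
        - kap * ds).
  exact: is_deriveB (heading_deriv e t i tp) (is_deriveZ kap dsd).
have growthA : growth i t <= sigma * A.
  apply: ler_wpM2l; first exact: ltW.
  by have := thA t (ltW tp) i; have := powR_ge0 (speed i t) p; lra.
have worst_j : 0 <= \sum_j weight i j t *
    ((heading e j t - kap * speed j t) - (heading e i t - kap * speed i t)).
  by apply: sumr_ge0 => j _; rewrite mulr_ge0 ?weight_ge0 // subr_ge0.
have kds := ler_wpM2l kap0 ds_le.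
have relax : \sum_j weight i j t * (heading e j t - heading e i t)
    - kap * \sum_j weight i j t * (speed j t - speed i t) =
  \sum_j weight i j t *
    ((heading e j t - kap * speed j t) - (heading e i t - kap * speed i t)).
  by rewrite mulr_sumr -sumrB; apply: eq_bigr => j _; ring.
move: defect; rewrite subr0 => defect; nra.
Qed.

(* Inside the cone, an agent slower than a^(1/p) (a a lower bound of theta)
   has positive self-propulsion, so a lower bound c <= kap a^(1/p) on the
   headings propagates in time. *)
Lemma heading_lower (e : 'I_n -> R) (kap a c : R) : 0 < kap -> 0 < a ->
  (forall t, 0 <= t -> forall i, a <= theta i t) ->
  (forall t, 0 <= t -> forall i, kap * speed i t <= heading e i t) ->
  c <= kap * a `^ p^-1 -> (forall i, c <= heading e i 0) ->
  forall t, 0 <= t -> forall i, c <= heading e i t.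
Proof.
move=> kap0 a0 tha cone c_le init.
apply: (min_principle (heading e) c 0 (lexx _)) => //.
  by move=> i; apply: cont0_dotp (v_cont i).
move=> t tp i low worst.
exists (\sum_j weight i j t * (heading e j t - heading e i t)
        + growth i t * heading e i t); first exact: heading_deriv.
have cone_i := cone t (ltW tp) i.
have slow : speed i t < a `^ p^-1.
  by rewrite -(ltr_pM2l kap0); move: low; lra.
have weak : powR (speed i t) p < a.
  have root : (a `^ p^-1) `^ p = a.
    by rewrite -powRrM mulVf ?gt_eqF // powRr1 // ltW.
  by rewrite -[ltRHS]root; apply: gt0_ltr_powR; rewrite ?nnegrE ?enorm_ge0 ?powR_ge0.
rewrite mul0r addr_ge0 ?sumr_ge0 // => [j _|].
  by rewrite mulr_ge0 ?weight_ge0 // subr_ge0.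
have growth_pos : 0 <= growth i t.
  by rewrite mulr_ge0 ?ltW //; have := tha t (ltW tp) i; lra.
by rewrite mulr_ge0 //; have := enorm_ge0 (fun k => v i k t); rewrite -/(speed i t); nra.
Qed.
End CSFDynamics.

Arguments theta_ge {R N n m sigma p kappa phi x v theta}.
Arguments theta_le {R N n m sigma p kappa phi x v theta}.
Arguments cone_invariant {R N n m sigma p kappa phi x v theta}.
Arguments heading_lower {R N n m sigma p kappa phi x v theta}.

Theorem lemma2p2 (R : realType) (N n : nat) (m : 'I_N -> R)
  (sigma p kappa : R) (phi : R -> R)
  (x v : 'I_N -> 'I_n -> R -> R) (theta : 'I_N -> R -> R) :
  (1 <= N)%N -> (1 <= n)%N ->
  (forall i, 0 < m i) -> 0 < sigma -> 0 < p -> 0 <= kappa ->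
  comm_kernel phi ->
  CSF_solution m sigma p kappa phi x v theta ->
  sectorial v ->
  exists c0 : R, 0 < c0 /\
    forall t : R, 0 <= t -> forall i : 'I_N, c0 <= enorm (fun k => v i k t).
Proof.
move=> _ _ m0 s0 p0 k0 [_ phi0 _] sol [e [e1 e_pos]].
have [th0 _ _ _ _] := sol.
have [a a0 a_le] := lb_fin _ th0.
have [A A0 A_ge] := ub_fin (fun i => theta i 0).
have th_ge := theta_ge m0 k0 phi0 sol a a_le.
have th_le := theta_le m0 k0 phi0 sol A A_ge.
have [kap kap0 kap_le] :=
  cone_aperture (heading v e ^~ 0) (speed v ^~ 0) e_pos (fun i => enorm_ge0 _).
have cone := cone_invariant m0 s0 phi0 sol e kap A (ltW kap0) A0 th_le kap_le.
have [d d0 d_le] := lb_fin _ e_pos.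
pose c := Num.min d (kap * a `^ p^-1).
have c_d : c <= d by rewrite ge_min lexx.
have c_r : c <= kap * a `^ p^-1 by rewrite ge_min lexx orbT.
have lower := heading_lower m0 s0 p0 phi0 sol e kap a c kap0 a0 th_ge cone c_r
  (fun i => le_trans c_d (d_le i)).
exists c; split; first by rewrite lt_min d0 mulr_gt0 ?powR_gt0.
by move=> t t0 i; apply: le_trans (lower t t0 i) (dotp_le_enorm _ _ e1).
Qed.
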